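(* Let $G$ be a $q$-cut-dense graph of order $n$. For any $U\subseteq V(G)$ with $|U|\le qn/8$, the graph $G\setminus U$ is $q/2$-cut-dense.
   Context: A graph $G$ is $q$-cut-dense if for every partition $V(G)=A\cup B$ into disjoint sets, $e_G(A,B)\ge q|A||B|$, where $e_G(A,B)$ is the number of edges of $G$ with one endpoint in $A$ and the other in $B$. $G\setminus U$ denotes $G$ with the vertices of $U$ deleted. *)

From HB Require Import structures.
From mathcomp Require Import all_boot all_order all_algebra.
Set Implicit Arguments. Unset Strict Implicit. Unset Printing Implicit Defensive.
Import Order.TTheory GRing.Theory Num.Theory.
Local Open Scope ring_scope.

Definition simple_graph (T : finType) (e : rel T) : Prop :=
  symmetric e /\ irreflexive e.

(* e_G(A,B): number of edges with one endpoint in A and the other in B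
   (for disjoint A, B each such edge corresponds to exactly one pair (a,b)
   with a in A, b in B). *)
Definition e_between (T : finType) (e : rel T) (A B : {set T}) : nat :=
  #|[set p : T * T | [&& p.1 \in A, p.2 \in B & e p.1 p.2]]|.

(* The induced subgraph G[S] is q-cut-dense: for every partition S = A ∪ B
   into disjoint sets, e(A,B) >= q |A| |B|. *)
Definition cut_dense_on (R : realFieldType) (T : finType) (e : rel T) (q : R)
    (S : {set T}) : Prop :=
  forall A B : {set T}, A :|: B = S -> [disjoint A & B] ->
    q * #|A|%:R * #|B|%:R <= (e_between e A B)%:R.

Definition cut_dense (R : realFieldType) (T : finType) (e : rel T) (q : R) : Prop :=
  cut_dense_on e q [set: T].

From mathcomp Require Import all_boot all_order all_algebra.
From mathcomp Require Import lra.
Set Implicit Arguments. Unset Strict Implicit. Unset Printing Implicit Defensive.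
Import Order.TTheory GRing.Theory Num.Theory.
Local Open Scope ring_scope.

(* Let A ∪ B be a partition of V(G) \ U with |A| <= |B|. Applying cut-density of
   G to the partition A ∪ (B ∪ U) of V(G) and discarding the at most |A||U| edges
   between A and U gives e(A,B) >= q|A||B| - (1 - q)|A||U|. Since |A| <= |B| and
   |U| <= qn/8, we have n <= 2|B| + |U|, which forces (1 - q)|U| <= q|B|/2, so
   e(A,B) >= (q/2)|A||B|. *)

Lemma cardsU_disjoint (T : finType) (A B : {set T}) :
  [disjoint A & B] -> #|A :|: B| = (#|A| + #|B|)%N.
Proof. by move=> AB_dis; apply/eqP; rewrite (leq_card_setU A B). Qed.

Section EdgeCount.

Variables (T : finType) (e : rel T).

Lemma e_betweenUr (A B C : {set T}) :
  (e_between e A (B :|: C) <= e_between e A B + e_between e A C)%N.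
Proof.
rewrite /e_between; apply: leq_trans (leq_card_setU _ _).
apply: subset_leq_card; apply/subsetP => p; rewrite !inE.
by case/and3P=> -> /orP[] -> ->; rewrite ?orbT.
Qed.

Lemma e_between_leq_mul (A B : {set T}) : (e_between e A B <= #|A| * #|B|)%N.
Proof.
rewrite -cardsX; apply: subset_leq_card; apply/subsetP => p; rewrite !inE.
by case/and3P=> -> ->.
Qed.

Lemma e_betweenC (A B : {set T}) :
  symmetric e -> e_between e A B = e_between e B A.
Proof.
move=> e_sym; rewrite /e_between.
have swap_inj : injective (fun p : T * T => (p.2, p.1)) by move=> [? ?] [? ?] [-> ->].
rewrite -(card_imset _ swap_inj); apply: eq_card => -[x y]; rewrite !inE /=.
apply/imsetP/and3P => [[[x' y']] | [Ax By exy]].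
  by rewrite !inE /= e_sym => /and3P[? ? ?] [-> ->].
by exists (y, x); rewrite // !inE /= e_sym Ax By exy.
Qed.

End EdgeCount.

Section CutDense.

Variables (R : realFieldType) (T : finType) (e : rel T).

Lemma cut_dense_on_le0 (q : R) (S : {set T}) : q <= 0 -> cut_dense_on e q S.
Proof.
move=> q_le0 A B _ _; apply: le_trans (ler0n _ _).
by rewrite -mulrA mulr_le0_ge0 // mulr_ge0.
Qed.

Lemma cut_dense_on_sym (q : R) (S : {set T}) :
  symmetric e ->
  (forall A B : {set T}, A :|: B = S -> [disjoint A & B] -> (#|A| <= #|B|)%N ->
     q * #|A|%:R * #|B|%:R <= (e_between e A B)%:R) ->
  cut_dense_on e q S.
Proof.
move=> e_sym small_side A B AB_S AB_dis.
have [|/ltnW BA] := leqP #|A| #|B|; first exact: small_side.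
rewrite e_betweenC // mulrAC.
by apply: small_side; rewrite // 1?setUC // disjoint_sym.
Qed.

Lemma card_partition_setC (A B U : {set T}) :
  A :|: B = ~: U -> [disjoint A & B] -> (#|A| + #|B| + #|U| = #|T|)%N.
Proof.
move=> AB_U AB_dis.
by rewrite -(cardsC U) -AB_U (cardsU_disjoint AB_dis) addnC.
Qed.

Lemma cut_dense_setC_lower_bound (q : R) (A B U : {set T}) :
  cut_dense e q -> A :|: B = ~: U -> [disjoint A & B] ->
  q * #|A|%:R * (#|B|%:R + #|U|%:R) <= (e_between e A B)%:R + #|A|%:R * #|U|%:R.
Proof.
move=> dense AB_U AB_dis.
have BU_dis : [disjoint B & U] by rewrite disjoints_subset -AB_U subsetUr.
have A_BU_dis : [disjoint A & B :|: U].
  by rewrite disjoints_subset setCU subsetI -disjoints_subset AB_dis -AB_U subsetUl.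
have A_BU_T : A :|: (B :|: U) = [set: T] by rewrite setUA AB_U setUC setUCr.
have := dense _ _ A_BU_T A_BU_dis.
rewrite (cardsU_disjoint BU_dis) natrD => /le_trans; apply.
rewrite -natrM -natrD ler_nat.
apply: leq_trans (e_betweenUr _ _ _ _) _.
by rewrite leq_add2l e_between_leq_mul.
Qed.

End CutDense.

Lemma cut_density_deletion_ineq (R : realFieldType) (q a b u x : R) :
  0 <= q -> 0 <= a <= b -> 0 <= u -> u <= q * (a + b + u) / 8 ->
  q * a * (b + u) <= x + a * u -> q / 2 * a * b <= x.
Proof.
move=> q_ge0 /andP[a_ge0 ab] u_ge0 u_small bound.
have u_mass : u * (1 - q) <= q * b / 2.
  have [q_le1 | q_gt1] := lerP q 1; last by nra.
  have : 0 <= q * (b - a) by apply: mulr_ge0; lra.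
  have : 0 <= (1 - q) * u by apply: mulr_ge0; lra.
  nra.
have : 0 <= a * (q * b / 2 - u * (1 - q)) by apply: mulr_ge0; lra.
lra.
Qed.

Theorem lemma3p7 (R : realFieldType) (T : finType) (e : rel T) (q : R) :
  simple_graph e -> cut_dense e q ->
  forall U : {set T}, #|U|%:R <= q * #|T|%:R / 8 ->
    cut_dense_on e (q / 2) (~: U).
Proof.
move=> [e_sym _] dense U U_small.
have [q_ge0 | q_lt0] := lerP 0 q; last by apply: cut_dense_on_le0; lra.
apply: cut_dense_on_sym => // A B AB_U AB_dis AB.
move: U_small; rewrite -(card_partition_setC AB_U AB_dis) !natrD => U_small.
apply: cut_density_deletion_ineq q_ge0 _ (ler0n _ _) U_small
  (cut_dense_setC_lower_bound dense AB_U AB_dis).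
by rewrite ler0n ler_nat.
Qed.
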